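(* Let $M$ be an Orlicz function and let $L_M$ be the Orlicz space either on $(0,1)$ or on $(0,\infty)$. Then $$4\Big\|\bigoplus_{k\geq1}\sigma_{\lambda_k}f_k\Big\|_{L_M}\geq \sum_{k\geq1}\lambda_k\|f_k\|_{L_M}$$ for every sequence $(f_k)_{k\ge1}\subset L_M$ and every sequence $(\lambda_k)_{k\ge1}\subset(0,1)$ with $\sum_{k\ge1}\lambda_k=1$.
   Context: An Orlicz function is an even convex function $M$ on $\mathbb{R}$ with $M(0)=0$; $\|g\|_{L_M}=\inf\{\lambda>0:\int M(|g|/\lambda)\le1\}$. The dilation is $(\sigma_u g)(t)=g(t/u)$ (functions defined only on $(0,1)$ are extended by $0$). $\bigoplus_k g_k$ denotes the disjoint sum of the functions $g_k$, i.e. a measurable function on the underlying interval whose distribution function is $\sum_k m(\{|g_k|>t\})$ (a function equimeasurable with the $g_k$ placed on pairwise disjoint sets). *)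

From HB Require Import structures.
From mathcomp Require Import all_boot all_order all_algebra.
From mathcomp Require Import all_classical all_reals all_analysis.
Set Implicit Arguments. Unset Strict Implicit. Unset Printing Implicit Defensive.
Import Order.TTheory GRing.Theory Num.Theory.
Local Open Scope classical_set_scope.
Local Open Scope ring_scope.

Definition orlicz_function (R : realType) (M : R -> R) : Prop :=
  [/\ (forall x, M (- x) = M x),
      (forall x y t, 0 <= t <= 1 -> M (t * x + (1 - t) * y) <= t * M x + (1 - t) * M y)
    & M 0 = 0].

(* Luxemburg norm on the domain D (with Lebesgue measure); +oo if no admissible lambda. *)
Definition orlicz_norm (R : realType) (M : R -> R) (D : set R) (g : R -> R) : \bar R :=
  ereal_inf [set l%:E | l in [set l : R | 0 < l /\
     (\int[lebesgue_measure]_(x in D) (M (`|g x| / l))%:E <= 1)%E]].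

Definition in_orlicz (R : realType) (M : R -> R) (D : set R) (g : R -> R) : Prop :=
  measurable_fun D g /\ (orlicz_norm M D g < +oo)%E.

Definition dilation (R : realType) (D : set R) (u : R) (g : R -> R) : R -> R :=
  fun t => if (t / u) \in D then g (t / u) else 0.

Definition distrib (R : realType) (D : set R) (g : R -> R) (t : R) : \bar R :=
  lebesgue_measure (D `&` [set x | t < `|g x|]).

From mathcomp Require Import all_boot all_order all_algebra.
From mathcomp Require Import all_classical all_reals all_analysis.
From mathcomp Require Import measurable_realfun ring lra.
Import Order.TTheory GRing.Theory Num.Theory.
Local Open Scope classical_set_scope.
Local Open Scope ring_scope.
Set Implicit Arguments. Unset Strict Implicit. Unset Printing Implicit Defensive.

(* For phi nondecreasing on [0, +oo) with phi 0 = 0, the dyadic step function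
   x |-> sum_i w_i [tau 2^i < x], with w_0 = phi tau and
   w_(i+1) = phi (tau 2^(i+1)) - phi (tau 2^i), lies between phi (x / 2) [tau < x]
   and phi x, and its integral against |h| is sum_i w_i d_h (tau 2^i), where d_h
   is the distribution function of h.  Dilation by lam multiplies distribution
   functions by lam, so d_g = sum_k lam_k d_(f_k); comparing the dyadic integrals
   and letting tau -> 0 yields sum_k lam_k int phi (|f_k| / 2) <= int phi |g|.
   For an admissible l of g (int M (|g| / l) <= 1) take phi = M (. / l);
   convexity gives ||h|| <= c (1 + int M (|h| / c)), and with c = 2 l this bounds
   sum_k lam_k ||f_k|| by 2 l (1 + 1) = 4 l.  Taking the infimum over l ends the
   proof. *)

Section NondecreasingOnNonneg.
Variables (R : realType) (phi : R -> R).
Hypothesis phi_nd : forall a b, 0 <= a -> a <= b -> phi a <= phi b.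

Lemma measurable_fun_comp_ge0 d (T : measurableType d) (D : set T) (u : T -> R) :
  measurable D -> measurable_fun D u -> (forall x, D x -> 0 <= u x) ->
  measurable_fun D (fun x => phi (u x)).
Proof.
move=> mD mu u0; have phi_pos_nd : nondecreasing_fun (fun y => phi (Num.max y 0)).
  move=> a b ab; apply: phi_nd; first by rewrite le_max lexx orbT.
  by rewrite ge_max !le_max ab lexx orbT.
have mphi_pos := nondecreasing_measurable measurableT phi_pos_nd.
apply: eq_measurable_fun (measurableT_comp mphi_pos mu).
by move=> x /set_mem Dx /=; rewrite max_l ?u0.
Qed.

Lemma measurable_fun_normr_div d (T : measurableType d) (D : set T)
    (h : T -> R) (c : R) :
  measurable D -> 0 <= c -> measurable_fun D h ->
  measurable_fun D (fun x => phi (`|h x| / c)).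
Proof.
move=> mD c0 mh; apply: measurable_fun_comp_ge0 => // [|x _].
  by apply: measurable_funM => //; apply: measurableT_comp.
by rewrite divr_ge0.
Qed.

End NondecreasingOnNonneg.

Section OrliczFunction.
Variables (R : realType) (M : R -> R).
Hypothesis HM : orlicz_function M.

Lemma orlicz_ge0 x : 0 <= M x.
Proof.
case: HM => Mev Mc M0.
have := Mc x (- x) 2^-1 ltac:(apply/andP; split; lra).
have -> : 2^-1 * x + (1 - 2^-1) * - x = 0 by lra.
rewrite Mev M0 => h; lra.
Qed.

Lemma orlicz_scale_le s x : 0 <= s <= 1 -> M (s * x) <= s * M x.
Proof. by case: HM => _ Mc M0 s01; have := Mc x 0 s s01; rewrite M0 !mulr0 !addr0. Qed.

Lemma orlicz_le x y : 0 <= x -> x <= y -> M x <= M y.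
Proof.
move=> x0 xy; have [y0|y0] := eqVneq y 0.
  by have -> : x = y by apply/le_anti; rewrite xy y0 x0.
have yp : 0 < y by rewrite lt_neqAle eq_sym y0 (le_trans x0 xy).
have s01 : 0 <= x / y <= 1.
  apply/andP; split; first exact: divr_ge0 x0 (ltW yp).
  by rewrite ler_pdivrMr ?mul1r.
have := @orlicz_scale_le _ y s01; rewrite divfK ?gt_eqF // => /le_trans; apply.
by apply: ler_piMl; [exact: orlicz_ge0 | case/andP: s01].
Qed.

End OrliczFunction.

Lemma measurable_normr_gt d (T : measurableType d) (R : realType) (D : set T)
    (h : T -> R) (t : R) :
  measurable D -> measurable_fun D h -> measurable (D `&` [set x | t < `|h x|]).
Proof.
move=> mD mh.
have mnh : measurable_fun D (fun x => `|h x|) by apply: measurableT_comp.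
have := mnh mD _ (measurable_itv `]t, +oo[).
by congr measurable; apply/seteqP; split => x /= [Dx]; rewrite in_itv andbT.
Qed.

Section LebesgueDilation.
Variable R : realType.
Local Notation mu := (@lebesgue_measure R).

Lemma lebesgue_measure_preimage_divr (c : R) (A : set R) : 0 < c -> measurable A ->
  mu ((fun x => x / c) @^-1` A) = (c%:E * mu A)%E.
Proof.
move=> c0 mA.
have mdiv : measurable_fun [set: measurableTypeR R]
    ((fun x => x / c) : measurableTypeR R -> measurableTypeR R).
  exact: measurable_funM.
have ic : 0 <= c^-1 by rewrite invr_ge0 ltW.
(* the measure instance of the pushforward depends on [mdiv] *)
pose nu := mscale (NngNum ic)
  (measure_function_pushforward__canonical__measure_function_Measure mu mdiv).
suff -> : mu A = (c^-1%:E * mu ((fun x => x / c)%R @^-1` A))%E.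
  by rewrite muleA -EFinM divff ?gt_eqF ?mul1e.
apply: (@lebesgue_measure_unique R nu) => // _ [[a b] _ <-].
rewrite /nu /= /mscale /= /pushforward.
have -> : (fun x => x / c) @^-1` `]a, b]%classic = `](a * c), (b * c)]%classic.
  by apply/seteqP; split => x /=; rewrite !in_itv /= ltr_pdivlMr // ler_pdivrMr.
rewrite !lebesgue_measure_itv /= !lte_fin ltr_pM2r //.
case: ifPn => ab; last by rewrite mule0.
by rewrite -!EFinB -EFinM; congr (_%:E); field; rewrite gt_eqF.
Qed.

Lemma distrib_dilation (D : set R) (u : R) (f : R -> R) (t : R) :
  measurable D -> 0 < u -> (forall x, D x -> D (u * x)) ->
  measurable_fun D f -> 0 <= t ->
  distrib D (dilation D u f) t = (u%:E * distrib D f t)%E.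
Proof.
move=> mD u0 Du mf t0; rewrite /distrib -lebesgue_measure_preimage_divr //;
  last exact: measurable_normr_gt.
congr mu; apply/seteqP; split => x /=; rewrite /dilation.
- case: ifPn => [/set_mem Dxu [_ ht] //|_ [_]].
  by rewrite normr0 ltNge t0.
- move=> [Dxu ht]; rewrite mem_set //; split => //.
  by rewrite -[x](@divfK _ u) ?gt_eqF // mulrC; exact: Du.
Qed.

Lemma mulr_itv0_closed (D : set R) (u x : R) :
  (D = `]0, 1[%classic \/ D = `]0, +oo[%classic) -> 0 < u <= 1 ->
  D x -> D (u * x).
Proof.
move=> HD /andP[u0 u1]; case: HD => -> /=; rewrite !in_itv /= => /andP[x0 x1].
  by rewrite mulr_gt0 //= (le_lt_trans _ x1) // ler_piMl // ltW.
by rewrite mulr_gt0.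
Qed.

End LebesgueDilation.

Section Distribution.
Variable R : realType.
Local Notation mu := (@lebesgue_measure R).

Lemma measurable_fun_indic_normr_gt (D : set R) (h : R -> R) (t : R) :
  measurable D -> measurable_fun D h ->
  measurable_fun D (fun x => (t < `|h x|)%R%:R : R).
Proof.
move=> mD mh; apply: (measurableT_comp (f := fun y : R => ((t < y)%R%:R : R))) => //.
  apply: nondecreasing_measurable => // a b ab; rewrite ler_nat.
  by case: (ltP t a) => //= ta; rewrite (lt_le_trans ta ab).
exact: measurableT_comp.
Qed.

Lemma integral_indic_normr_gt (D : set R) (h : R -> R) (t : R) :
  measurable D -> measurable_fun D h ->
  (\int[mu]_(x in D) ((t < `|h x|)%R%:R)%:E = distrib D h t)%E.
Proof.
move=> mD mh; rewrite /distrib; set A := D `&` _.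
transitivity (\int[mu]_(x in D) (\1_A x)%:E)%E.
  apply: eq_integral => x /set_mem Dx; rewrite indicE.
  suff -> : (x \in A) = (t < `|h x|)%R by [].
  by apply/idP/idP => [/set_mem[]//|tx]; apply/mem_set.
by rewrite integral_indic ?setIidl //; [exact: subIsetl | exact: measurable_normr_gt].
Qed.

End Distribution.

Section DyadicMinorant.
Variables (R : realType) (phi : R -> R) (tau : R).
Hypothesis phi_nd : forall a b, 0 <= a -> a <= b -> phi a <= phi b.
Hypothesis phi_ge0 : forall a, 0 <= a -> 0 <= phi a.
Hypothesis tau_gt0 : 0 < tau.

Definition dyadic_point (i : nat) : R := tau * 2 ^+ i.

Definition dyadic_weight (i : nat) : R :=
  phi (dyadic_point i) - (if i is j.+1 then phi (dyadic_point j) else 0).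

Definition dyadic_step (n : nat) (x : R) : R :=
  \sum_(0 <= i < n) dyadic_weight i * (dyadic_point i < x)%R%:R.

Definition dyadic_series (x : R) : \bar R :=
  (\sum_(i <oo) (dyadic_weight i * (dyadic_point i < x)%R%:R)%:E)%E.

Lemma dyadic_point_gt0 i : 0 < dyadic_point i.
Proof. by rewrite mulr_gt0 ?exprn_gt0. Qed.

Lemma dyadic_pointS i : dyadic_point i.+1 = 2 * dyadic_point i.
Proof. by rewrite /dyadic_point exprS mulrCA. Qed.

Lemma dyadic_point_le i : dyadic_point i <= dyadic_point i.+1.
Proof. by have := dyadic_point_gt0 i; rewrite dyadic_pointS; lra. Qed.

Lemma dyadic_weight_ge0 i : 0 <= dyadic_weight i.
Proof.
case: i => [|i]; rewrite /dyadic_weight subr_ge0; first exact/phi_ge0/ltW/dyadic_point_gt0.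
by apply: phi_nd; [exact/ltW/dyadic_point_gt0 | exact: dyadic_point_le].
Qed.

Lemma dyadic_step_point m x :
  dyadic_point m < x -> dyadic_step m.+1 x = phi (dyadic_point m).
Proof.
elim: m => [|m IH] xm; first by rewrite /dyadic_step big_nat1 xm mulr1 /dyadic_weight subr0.
rewrite /dyadic_step big_nat_recr //= -/(dyadic_step m.+1 x) IH; last first.
  exact: le_lt_trans (dyadic_point_le m) xm.
by rewrite xm mulr1 addrC subrK.
Qed.

Lemma dyadic_step_le n x : 0 <= x -> dyadic_step n x <= phi x.
Proof.
move=> x0; elim: n => [|n IH]; first by rewrite /dyadic_step big_geq ?phi_ge0.
case: (boolP (dyadic_point n < x)) => xn.
  by rewrite dyadic_step_point // phi_nd // ltW ?dyadic_point_gt0.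
by rewrite /dyadic_step big_nat_recr //= (negbTE xn) mulr0 addr0.
Qed.

Lemma dyadic_step_ge x : tau < x -> exists n, phi (x / 2) <= dyadic_step n x.
Proof.
move=> taux; have x0 : 0 <= x by rewrite ltW // (lt_trans tau_gt0).
have exn : exists n, x <= dyadic_point n.
  exists (Num.bound (tau^-1 * x)); rewrite /dyadic_point -ler_pdivrMl //.
  apply: le_trans (ltW (archi_boundP _)) _; first by rewrite mulr_ge0 // invr_ge0 ltW.
  by rewrite -natrX ler_nat ltnW // ltn_expl.
case: (ex_minnP exn) => -[|m] xm minm.
  by move: xm; rewrite /dyadic_point expr0 mulr1 leNgt taux.
have mx : dyadic_point m < x by rewrite ltNge; apply/negP => /minm; rewrite ltnn.
exists m.+1; rewrite dyadic_step_point //.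
by apply: phi_nd; [rewrite divr_ge0 | move: xm; rewrite dyadic_pointS; lra].
Qed.

Local Open Scope ereal_scope.

Let dyadic_series_partial n x :
  \sum_(0 <= i < n) (dyadic_weight i * (dyadic_point i < x)%R%:R)%:E =
  (dyadic_step n x)%:E.
Proof. by rewrite sumEFin. Qed.

Let dyadic_term_ge0 x i : 0 <= (dyadic_weight i * (dyadic_point i < x)%R%:R)%:E.
Proof. by rewrite lee_fin mulr_ge0 ?dyadic_weight_ge0. Qed.

Lemma dyadic_series_le x : (0 <= x)%R -> dyadic_series x <= (phi x)%:E.
Proof.
move=> x0; apply: lime_le; first exact: is_cvg_nneseries.
by apply: nearW => n; rewrite dyadic_series_partial lee_fin dyadic_step_le.
Qed.

Lemma dyadic_series_ge x : (phi (x / 2) * (tau < x)%R%:R)%:E <= dyadic_series x.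
Proof.
case: (boolP (tau < x)%R) => [/dyadic_step_ge[n xn]|_].
  by rewrite mulr1; apply: le_trans (nneseries_lim_ge n _);
    rewrite ?dyadic_series_partial ?lee_fin.
by rewrite mulr0; apply: nneseries_ge0.
Qed.

Lemma integral_dyadic_series (D : set R) (h : R -> R) :
  measurable D -> measurable_fun D h ->
  \int[lebesgue_measure]_(x in D) dyadic_series `|h x| =
  \sum_(i <oo) (dyadic_weight i)%:E * distrib D h (dyadic_point i).
Proof.
move=> mD mh; have mind i := @measurable_fun_indic_normr_gt _ _ _ (dyadic_point i) mD mh.
rewrite integral_nneseries //; last first.
  by move=> i; apply/measurable_EFinP; apply: measurable_funM => //; exact: mind.
apply: eq_eseriesr => i _; under eq_integral do rewrite EFinM.
rewrite ge0_integralZl_EFin ?dyadic_weight_ge0 ?integral_indic_normr_gt //.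
by apply/measurable_EFinP; exact: mind.
Qed.

Lemma measurable_dyadic_series (D : set R) (h : R -> R) :
  measurable D -> measurable_fun D h ->
  measurable_fun D (fun x => dyadic_series `|h x|).
Proof.
move=> mD mh; apply: (ge0_emeasurable_sum (P := predT)) => // i _.
apply/measurable_EFinP; apply: measurable_funM => //.
exact: measurable_fun_indic_normr_gt.
Qed.

End DyadicMinorant.

Lemma nneseries_le_cvg (R : realType) (a : nat -> nat -> \bar R)
    (b : nat -> \bar R) (C : \bar R) :
  (forall k N, (0 <= a k N)%E) -> (forall k, a k N @[N --> \oo] --> b k) ->
  (forall N, \sum_(k <oo) a k N <= C)%E -> (\sum_(k <oo) b k <= C)%E.
Proof.
move=> a0 ab aC; have b0 k : (0 <= b k)%E.
  by apply: (cvge_ge _ (ab k)); apply: nearW.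
apply: lime_le; first exact: is_cvg_nneseries.
apply: nearW => K; have : \sum_(0 <= k < K) a k N @[N --> \oo] --> \sum_(0 <= k < K) b k.
  by apply: cvg_nnesum => k _; [exact: nearW | exact: ab].
apply: cvge_le; apply: nearW => N; apply: le_trans (aC N).
exact: nneseries_lim_ge.
Qed.

Lemma cvg_integral_normr_gt (R : realType) (D : set R) (psi h : R -> R) :
  measurable D -> measurable_fun D psi -> measurable_fun D h ->
  (forall x, D x -> 0 <= psi x) -> (forall x, D x -> h x = 0 -> psi x = 0) ->
  (\int[lebesgue_measure]_(x in D) (psi x * (N.+1%:R^-1 < `|h x|)%R%:R)%:E)%E
    @[N --> \oo] --> (\int[lebesgue_measure]_(x in D) (psi x)%:E)%E.
Proof.
move=> mD mpsi mh psi0 psi_h0.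
pose G N x := (psi x * (N.+1%:R^-1 < `|h x|)%R%:R)%:E.
have G_lim x : D x -> limn (G^~ x) = (psi x)%:E.
  move=> Dx; apply/cvg_lim => //; apply: cvg_near_cst.
  have [hx0|hx0] := eqVneq (h x) 0.
    by apply: nearW => N; rewrite /G psi_h0 ?mul0r.
  exists (Num.bound `|h x|^-1) => // N /= hN; rewrite /G.
  suff -> : (N.+1%:R^-1 < `|h x|)%R by rewrite mulr1.
  rewrite invf_plt ?posrE ?normr_gt0 //.
  apply: lt_le_trans (archi_boundP _) _; first by rewrite invr_ge0.
  by rewrite ler_nat (leq_trans hN).
have -> : (\int[lebesgue_measure]_(x in D) (psi x)%:E =
    \int[lebesgue_measure]_(x in D) limn (G^~ x))%E.
  by apply: eq_integral => x /set_mem Dx; rewrite G_lim.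
apply: cvg_monotone_convergence => //.
- move=> N; apply/measurable_EFinP; apply: measurable_funM => //.
  exact: measurable_fun_indic_normr_gt.
- by move=> N x Dx; rewrite lee_fin mulr_ge0 ?psi0.
- move=> x Dx m n mn; rewrite lee_fin ler_wpM2l ?psi0 // ler_nat.
  case: (boolP (m.+1%:R^-1 < `|h x|)%R) => // hm.
  by rewrite (le_lt_trans _ hm) // lef_pV2 ?posrE // ler_nat.
Qed.

Section EquimeasurableSum.
Variables (R : realType) (D : set R) (phi : R -> R).
Variables (f : nat -> R -> R) (lam : nat -> R) (g : R -> R).
Hypothesis mD : measurable D.
Hypothesis phi_nd : forall a b, 0 <= a -> a <= b -> phi a <= phi b.
Hypothesis phi0 : phi 0 = 0.
Hypothesis mf : forall k, measurable_fun D (f k).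
Hypothesis mg : measurable_fun D g.
Hypothesis lam_ge0 : forall k, 0 <= lam k.
Hypothesis distrib_g : forall t, 0 < t ->
  distrib D g t = (\sum_(k <oo) (lam k)%:E * distrib D (f k) t)%E.
Local Notation mu := (@lebesgue_measure R).

Let phi_ge0 a : 0 <= a -> 0 <= phi a.
Proof. by move=> a0; rewrite -phi0 phi_nd. Qed.

Local Open Scope ereal_scope.

Lemma nneseries_integral_normr_gt_le tau : (0 < tau)%R ->
  \sum_(k <oo) (lam k)%:E *
    \int[mu]_(x in D) (phi (`|f k x| / 2) * (tau < `|f k x|)%R%:R)%:E
  <= \int[mu]_(x in D) (phi `|g x|)%:E.
Proof.
move=> tau0; pose J (h : R -> R) := \int[mu]_(x in D) dyadic_series phi tau `|h x|.
have w0 := dyadic_weight_ge0 phi_nd phi_ge0 tau0.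
have J_g : J g = \sum_(k <oo) (lam k)%:E * J (f k).
  rewrite /J integral_dyadic_series //; transitivity (\sum_(i <oo) \sum_(k <oo)
    (dyadic_weight phi tau i)%:E * ((lam k)%:E * distrib D (f k) (dyadic_point tau i))).
    apply: eq_eseriesr => i _; rewrite distrib_g ?dyadic_point_gt0 // nneseriesZl //.
    by move=> k _; rewrite mule_ge0 ?lee_fin.
  rewrite nneseries_interchange; last by move=> i k; rewrite !mule_ge0 ?lee_fin.
  apply: eq_eseriesr => k _; rewrite integral_dyadic_series // -nneseriesZl.
    by apply: eq_eseriesr => i _; rewrite muleCA.
  by move=> i _; rewrite mule_ge0 ?lee_fin.
apply: (@le_trans _ _ (J g)); last first.
  apply: ge0_le_integral => //.
  - by move=> x _; apply: nneseries_ge0 => i _ _; rewrite lee_fin mulr_ge0.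
  - exact: (measurable_dyadic_series phi_nd phi_ge0 tau0).
  - apply/measurable_EFinP; apply: measurable_fun_comp_ge0 => //.
    exact: measurableT_comp.
  - by move=> x _; exact: (dyadic_series_le phi_nd phi_ge0 tau0).
rewrite J_g; apply: lee_nneseries => k _.
  by rewrite mule_ge0 ?lee_fin // integral_ge0 // => x _; rewrite lee_fin mulr_ge0 ?phi_ge0.
apply: lee_wpmul2l; first by rewrite lee_fin.
apply: ge0_le_integral => //.
- by move=> x _; rewrite lee_fin mulr_ge0 ?phi_ge0.
- apply/measurable_EFinP; apply: measurable_funM.
    exact: (measurable_fun_normr_div phi_nd mD (ler0n R 2) (mf k)).
  by apply: measurable_fun_indic_normr_gt.
- exact: (measurable_dyadic_series phi_nd phi_ge0 tau0).
- by move=> x _; exact: (dyadic_series_ge phi_nd phi_ge0 tau0).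
Qed.

Lemma nneseries_integral_le_of_distrib :
  \sum_(k <oo) (lam k)%:E * \int[mu]_(x in D) (phi (`|f k x| / 2))%:E
  <= \int[mu]_(x in D) (phi `|g x|)%:E.
Proof.
pose a k N := (lam k)%:E * \int[mu]_(x in D)
  (phi (`|f k x| / 2) * (N.+1%:R^-1 < `|f k x|)%R%:R)%:E.
apply: (@nneseries_le_cvg _ a).
- move=> k N; rewrite mule_ge0 ?lee_fin // integral_ge0 // => x _.
  by rewrite lee_fin mulr_ge0 ?phi_ge0.
- move=> k; apply: cvgeZl => //; apply: cvg_integral_normr_gt => //.
  + exact: (measurable_fun_normr_div phi_nd mD (ler0n R 2) (mf k)).
  + by move=> x _; rewrite phi_ge0.
  + by move=> x _ ->; rewrite normr0 mul0r phi0.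
- by move=> N; apply: nneseries_integral_normr_gt_le.
Qed.

End EquimeasurableSum.

Section LuxemburgNorm.
Variables (R : realType) (M : R -> R) (D : set R).
Hypothesis HM : orlicz_function M.
Hypothesis mD : measurable D.
Local Notation mu := (@lebesgue_measure R).
Local Open Scope ereal_scope.

Lemma orlicz_norm_ge0 h : 0 <= orlicz_norm M D h.
Proof. by apply: le_ereal_inf_tmp => _ [l [l0 _] <-]; rewrite lee_fin ltW. Qed.

Let integral_orlicz_ge0 (h : R -> R) (c : R) : 0 <= \int[mu]_(x in D) (M (`|h x| / c))%:E.
Proof. by apply: integral_ge0 => x _; rewrite lee_fin orlicz_ge0. Qed.

Lemma orlicz_norm_le (h : R -> R) (c : R) : measurable_fun D h -> (0 < c)%R ->
  orlicz_norm M D h <= c%:E * (1 + \int[mu]_(x in D) (M (`|h x| / c))%:E).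
Proof.
move=> mh c0; have mM c' := measurable_fun_normr_div (orlicz_le HM) mD c' mh.
have := integral_orlicz_ge0 h c.
case E: (\int[mu]_(x in D) _) => [r| |] // r0; last first.
  by rewrite addey // mulry gtr0_sg // mul1e leey.
rewrite lee_fin in r0; have r1 : (0 < 1 + r)%R by lra.
apply: ge_ereal_inf; exists (c * (1 + r))%:E; last by rewrite EFinM.
exists (c * (1 + r))%R => //; split; first exact: mulr_gt0.
apply: (@le_trans _ _ (\int[mu]_(x in D) ((1 + r)^-1%:E * (M (`|h x| / c))%:E))).
  apply: ge0_le_integral => //.
  - by move=> x _; rewrite lee_fin orlicz_ge0.
  - by apply/measurable_EFinP; apply: mM; rewrite ltW ?mulr_gt0.
  - by apply/measurable_EFinP; apply: measurable_funM => //; apply: mM; rewrite ltW.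
  - move=> x _; rewrite -EFinM lee_fin.
    have -> : (`|h x| / (c * (1 + r)) = (1 + r)^-1 * (`|h x| / c))%R.
      by rewrite invfM; ring.
    by apply: (orlicz_scale_le HM); rewrite invr_ge0 ltW //= invf_le1 //; lra.
rewrite ge0_integralZl_EFin //.
- by rewrite E -EFinM lee_fin mulrC ler_pdivrMr // mul1r; lra.
- by move=> x _; rewrite lee_fin orlicz_ge0.
- by apply/measurable_EFinP; apply: mM; rewrite ltW.
- by rewrite invr_ge0 ltW.
Qed.

Lemma lee_orlicz_norm (g : R -> R) (c : R) (z : \bar R) : (0 < c)%R ->
  (forall l, (0 < l)%R -> \int[mu]_(x in D) (M (`|g x| / l))%:E <= 1 ->
    z <= (c * l)%:E) ->
  z <= c%:E * orlicz_norm M D g.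
Proof.
move=> c0 zl; rewrite -lee_pdivrMl //; apply: le_ereal_inf_tmp => _ [l [l0 hl] <-].
by rewrite lee_pdivrMl // -EFinM zl.
Qed.

Lemma nneseries_orlicz_norm_le (f : nat -> R -> R) (lam : nat -> R) (c : R) :
  (forall k, measurable_fun D (f k)) -> (forall k, (0 <= lam k)%R) -> (0 < c)%R ->
  \sum_(k <oo) (lam k)%:E * orlicz_norm M D (f k) <=
  c%:E * (\sum_(k <oo) (lam k)%:E +
          \sum_(k <oo) (lam k)%:E * \int[mu]_(x in D) (M (`|f k x| / c))%:E).
Proof.
move=> mf lam0 c0; have lamE k : 0 <= (lam k)%:E by rewrite lee_fin.
rewrite -nneseriesD //; last by move=> k _ _; rewrite mule_ge0.
rewrite -nneseriesZl => [|k _]; last by rewrite adde_ge0 ?mule_ge0.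
apply: lee_nneseries => [k _ _|k _]; first by rewrite mule_ge0 ?orlicz_norm_ge0.
rewrite -[X in _ <= _ * (X + _)]mule1 -ge0_muleDr ?mule_ge0 // muleCA.
by apply: lee_wpmul2l => //; exact: orlicz_norm_le.
Qed.

End LuxemburgNorm.

Unset Implicit Arguments.

Theorem lemma3p2 (R : realType) (M : R -> R) (D : set R)
  (f : nat -> R -> R) (lam : nat -> R) (g : R -> R) :
  orlicz_function M ->
  (D = `]0, 1[%classic \/ D = `]0, +oo[%classic) ->
  (forall k, in_orlicz M D (f k)) ->
  (forall k, 0 < lam k < 1) ->
  (\sum_(0 <= k <oo) (lam k)%:E = 1)%E ->
  (* g is the disjoint sum of the dilations sigma_{lam k} (f k) *)
  measurable_fun D g ->
  (forall t : R, 0 < t ->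
     distrib D g t = (\sum_(0 <= k <oo) distrib D (dilation D (lam k) (f k)) t)%E) ->
  (\sum_(0 <= k <oo) ((lam k)%:E * orlicz_norm M D (f k))
     <= 4%:E * orlicz_norm M D g)%E.
Proof.
move=> HM HD hf hlam hsum mg hdist.
have mD : measurable D by case: HD => ->; exact: measurable_itv.
have mf k : measurable_fun D (f k) := (hf k).1.
have lam_ge0 k : 0 <= lam k by case/andP: (hlam k) => /ltW.
have distrib_g t : 0 < t ->
    distrib D g t = (\sum_(k <oo) (lam k)%:E * distrib D (f k) t)%E.
  move=> t0; rewrite hdist //; apply: eq_eseriesr => k _.
  case/andP: (hlam k) => l0 l1; have lam01 : 0 < lam k <= 1 by rewrite l0 ltW.
  by rewrite (distrib_dilation mD l0 (fun _ => mulr_itv0_closed HD lam01)) ?ltW.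
apply: lee_orlicz_norm => // l l0 hl.
have phi_nd a b : 0 <= a -> a <= b -> M (a / l) <= M (b / l).
  move=> a0 ab; apply: (orlicz_le HM); first by rewrite divr_ge0 // ltW.
  by rewrite ler_pM2r // invr_gt0.
have half_le_1 : (\sum_(k <oo) (lam k)%:E *
    \int[lebesgue_measure]_(x in D) (M (`|f k x| / (2 * l)))%:E <= 1)%E.
  apply: le_trans hl; under eq_eseriesr do under eq_integral do rewrite invfM mulrA.
  have M0 : M (0 / l) = 0 by rewrite mul0r; case: HM.
  exact: (nneseries_integral_le_of_distrib mD phi_nd M0 mf mg lam_ge0 distrib_g).
have l2 : 0 < 2 * l by rewrite mulr_gt0.
apply: le_trans (nneseries_orlicz_norm_le HM mD mf lam_ge0 l2) _.
rewrite hsum; apply: le_trans (lee_wpmul2l _ (leeD2l 1 half_le_1)) _.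
  by rewrite lee_fin mulr_ge0 // ltW.
by rewrite -EFinD -EFinM lee_fin; lra.
Qed.
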